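(* Let $r \in \mathbb{Q}_{>0}$ be such that $S_r$ is atomic. Then there exists $x \in S_r$ with $\rho(x) = \rho(S_r)$ (i.e., the elasticity of $S_r$ is accepted) if and only if $r \in \mathbb{N}$ or $r < 1$.
   Context: For $q \in \mathbb{Q}_{>0}$, $\mathsf{n}(q),\mathsf{d}(q)$ are the positive coprime integers with $q = \mathsf{n}(q)/\mathsf{d}(q)$. $S_r$ is the additive submonoid of $(\mathbb{Q}_{\ge 0},+)$ generated by $\{r^n : n \in \mathbb{N}_0\}$; it is atomic exactly when $r=1$ or $\mathsf{n}(r)>1$. $\mathsf{L}(x)$ denotes the set of lengths of factorizations of $x$ into atoms. The elasticity of $x \ne 0$ is $\rho(x) = \sup \mathsf{L}(x)/\inf \mathsf{L}(x) \in \mathbb{Q}_{\ge 1} \cup \{\infty\}$, $\rho(0)=1$, and $\rho(S_r) = \sup\{\rho(x) : x \in S_r \setminus \{0\}\}$. *)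

From HB Require Import structures.
From mathcomp Require Import all_boot all_order all_algebra.
Set Implicit Arguments. Unset Strict Implicit. Unset Printing Implicit Defensive.
Import Order.TTheory GRing.Theory Num.Theory.
Local Open Scope ring_scope.

Definition in_Sr (r x : rat) : Prop :=
  exists c : seq nat, x = \sum_(i < size c) (nth 0%N c i)%:R * r ^+ i.

Definition atom_Sr (r a : rat) : Prop :=
  [/\ in_Sr r a, a <> 0 &
      forall b c, in_Sr r b -> in_Sr r c -> a = b + c -> b = 0 \/ c = 0].

(* a factorization of x: a (multi)set of atoms, listed as a sequence, summing to x *)
Definition factorization (r x : rat) (s : seq rat) : Prop :=
  (forall a, a \in s -> atom_Sr r a) /\ \sum_(a <- s) a = x.

Definition atomic_Sr (r : rat) : Prop :=
  forall x, in_Sr r x -> x <> 0 -> exists s, factorization r x s.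

Definition in_L (r x : rat) (n : nat) : Prop :=
  exists s, factorization r x s /\ size s = n.

Inductive erat := EFin of rat | EInf.

Definition ele (e f : erat) : Prop :=
  match e, f with
  | _, EInf => True
  | EInf, EFin _ => False
  | EFin a, EFin b => a <= b
  end.

(* rho_x r x e : e is the elasticity rho(x) = sup L(x) / inf L(x) (rho(0) = 1) *)
Definition rho_x (r x : rat) (e : erat) : Prop :=
  (x = 0 /\ e = EFin 1) \/
  (x <> 0 /\ exists m, in_L r x m /\ (forall n, in_L r x n -> (m <= n)%N) /\
     ((exists M, in_L r x M /\ (forall n, in_L r x n -> (n <= M)%N) /\
                 e = EFin (M%:R / m%:R)) \/
      ((forall N, exists n, in_L r x n /\ (N < n)%N) /\ e = EInf))).

Definition rho_S (r : rat) (e : erat) : Prop :=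
  (forall x f, in_Sr r x -> x <> 0 -> rho_x r x f -> ele f e) /\
  (forall e', (forall x f, in_Sr r x -> x <> 0 -> rho_x r x f -> ele f e') -> ele e e').

From HB Require Import structures.
From mathcomp Require Import all_boot all_order all_algebra.
From mathcomp Require Import ring lra zify.
From Stdlib Require Import Classical.
Import Order.TTheory GRing.Theory Num.Theory.
Set Implicit Arguments. Unset Strict Implicit. Unset Printing Implicit Defensive.
Local Open Scope ring_scope.

(* Write r = a / b in lowest terms. Three regimes are treated separately.
   - r = n a natural number: S_r = N, whose only atom is 1, so every nonzero
     x has the single length x and elasticity 1; rho(S_r) = 1 is attained at 1.
   - r < 1: the identity a r^j = (b - a) r^(j+1) + a r^(j+1) splits a into
     arbitrarily many nonzero summands, so (by atomicity) a has arbitrarily long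
     factorizations and rho(a) = oo = rho(S_r).
   - r > 1 not an integer: every power r^k is an atom (a denominator argument),
     so a^k = b^k r^k gives rho(a^k) >= r^k and rho(S_r) is not finite; but all
     atoms are >= 1, so lengths of x are bounded by x and each rho(x) is finite. *)

Definition sr_eval (r : rat) (c : seq nat) : rat :=
  \sum_(i < size c) (nth 0%N c i)%:R * r ^+ i.

Lemma sr_eval_nil r : sr_eval r [::] = 0.
Proof. by rewrite /sr_eval big_ord0. Qed.

Lemma sr_eval_cons r c0 c : sr_eval r (c0 :: c) = c0%:R + r * sr_eval r c.
Proof.
rewrite /sr_eval /= big_ord_recl /= expr0 mulr1 mulr_sumr; congr (_ + _).
by apply: eq_bigr => i _; rewrite exprS mulrCA.
Qed.

Lemma sr_eval_add r c d : exists e, sr_eval r e = sr_eval r c + sr_eval r d.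
Proof.
elim: c d => [|c0 c IH] [|d0 d].
- by exists [::]; rewrite sr_eval_nil addr0.
- by exists (d0 :: d); rewrite sr_eval_nil add0r.
- by exists (c0 :: c); rewrite sr_eval_nil addr0.
- have [e He] := IH d; exists ((c0 + d0)%N :: e).
  by rewrite !sr_eval_cons He natrD; ring.
Qed.

Lemma Sr_eval r c : in_Sr r (sr_eval r c).
Proof. by exists c. Qed.

Lemma Sr_nat r n : in_Sr r n%:R.
Proof. by have := Sr_eval r [:: n]; rewrite sr_eval_cons sr_eval_nil mulr0 addr0. Qed.

Lemma SrD r x y : in_Sr r x -> in_Sr r y -> in_Sr r (x + y).
Proof. by move=> [c ->] [d ->]; have [e <-] := sr_eval_add r c d; apply: Sr_eval. Qed.

Lemma SrM r x : in_Sr r x -> in_Sr r (r * x).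
Proof. by move=> [c ->]; have := Sr_eval r (0%N :: c); rewrite sr_eval_cons add0r. Qed.

Lemma SrX r k : in_Sr r (r ^+ k).
Proof. by elim: k => [|k IH]; [exact: (Sr_nat r 1) | rewrite exprS; apply: SrM]. Qed.

Lemma SrMn r n x : in_Sr r x -> in_Sr r (n%:R * x).
Proof.
move=> hx; elim: n => [|n IH]; first by rewrite mul0r; apply: (Sr_nat r 0).
by rewrite -natr1 mulrDl mul1r; apply: SrD.
Qed.

Lemma sr_eval_ge0 r c : 0 <= r -> 0 <= sr_eval r c.
Proof.
move=> r_ge0; elim: c => [|c0 c IH]; first by rewrite sr_eval_nil.
by rewrite sr_eval_cons addr_ge0 // mulr_ge0.
Qed.

Lemma sr_eval_ge1 r c : 1 <= r -> sr_eval r c = 0 \/ 1 <= sr_eval r c.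
Proof.
move=> r_ge1; elim: c => [|[|c0] c IH]; first by left; rewrite sr_eval_nil.
- rewrite sr_eval_cons add0r; case: IH => [->|h]; first by left; rewrite mulr0.
  by right; rewrite -(mulr1 1) ler_pM.
- right; rewrite sr_eval_cons.
  have : 0 <= r * sr_eval r c by rewrite mulr_ge0 ?sr_eval_ge0 //; lra.
  have : 1 <= c0.+1%:R :> rat by rewrite ler1n.
  lra.
Qed.

Lemma Sr_ge1 r x : 1 <= r -> in_Sr r x -> x <> 0 -> 1 <= x.
Proof. by move=> r_ge1 [c ->]; case: (sr_eval_ge1 c r_ge1). Qed.

(* For r >= 1, the element 1 is an atom: a sum of two nonzero elements is >= 2. *)
Lemma atom_one r : 1 <= r -> atom_Sr r 1.
Proof.
move=> r_ge1; split; [exact: (Sr_nat r 1) | by apply/eqP; rewrite oner_eq0 |].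
move=> u v hu hv uv.
case: (classic (u = 0)) => [|u0]; first by left.
case: (classic (v = 0)) => [|v0]; first by right.
have := Sr_ge1 r_ge1 hu u0; have := Sr_ge1 r_ge1 hv v0; lra.
Qed.

(* Let r = a / b >= 1. An element of S_r below r^(k+1) only involves
   r^0, ..., r^k, hence multiplying it by b^k clears all denominators. *)
Lemma sr_eval_below_pow r (a b : nat) k c : 1 <= r -> r * b%:R = a%:R ->
  sr_eval r c < r ^+ k.+1 -> exists n : nat, sr_eval r c * b%:R ^+ k = n%:R.
Proof.
move=> r_ge1 r_ab; have r_gt0 : 0 < r by lra.
elim: k c => [|k IH] [|c0 c]; rewrite ?sr_eval_nil ?mul0r; try by exists 0%N.
- rewrite sr_eval_cons expr1 mulr1 => lt_r.
  case: (sr_eval_ge1 c r_ge1) => [->|rest_ge1]; first by exists c0; rewrite mulr0 addr0.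
  have : r <= r * sr_eval r c by rewrite ler_peMr ?(ltW r_gt0).
  have : 0 <= c0%:R :> rat by []. lra.
- rewrite sr_eval_cons => lt_pow.
  have [n Hn] : exists n : nat, sr_eval r c * b%:R ^+ k = n%:R.
    apply: IH; rewrite -(ltr_pM2l r_gt0) -exprS.
    have : 0 <= c0%:R :> rat by []. lra.
  exists (c0 * b ^ k.+1 + a * n)%N.
  by rewrite natrD !natrM natrX -Hn -r_ab exprS; ring.
Qed.

(* When r = a / b >= 1 is in lowest terms with b > 1, every power r^k is an
   atom: a splitting r^(k+1) = u + v into nonzero summands forces b | a^(k+1). *)
Lemma power_atom r (a b : nat) k : 1 <= r -> r * b%:R = a%:R ->
  coprime a b -> (1 < b)%N -> atom_Sr r (r ^+ k).
Proof.
move=> r_ge1 r_ab cop_ab b_gt1.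
case: k => [|k]; first by rewrite expr0; apply: atom_one.
split; [exact: SrX | by apply/eqP; rewrite expf_neq0 // gt_eqF // (lt_le_trans ltr01 r_ge1) |].
move=> _ _ [cu ->] [cv ->]; rewrite -/(sr_eval r cu) -/(sr_eval r cv) => uv.
case: (sr_eval_ge1 cu r_ge1) => [|u_ge1]; first by left.
case: (sr_eval_ge1 cv r_ge1) => [|v_ge1]; first by right.
have [n1 Hn1] : exists n : nat, sr_eval r cu * b%:R ^+ k = n%:R.
  by apply: (sr_eval_below_pow r_ge1 r_ab); lra.
have [n2 Hn2] : exists n : nat, sr_eval r cv * b%:R ^+ k = n%:R.
  by apply: (sr_eval_below_pow r_ge1 r_ab); lra.
have a_pow : (a ^ k.+1 = (n1 + n2) * b)%N.
  apply/eqP; rewrite -(eqr_nat rat) natrM natrD !natrX -Hn1 -Hn2 -r_ab exprMn uv.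
  by rewrite exprS; apply/eqP; ring.
have b_dvd : (b %| a ^ k.+1)%N by rewrite a_pow dvdn_mull.
have := coprimeXl k.+1 cop_ab; rewrite /coprime (gcdn_idPr b_dvd) => /eqP b1.
by rewrite b1 in b_gt1.
Qed.

Lemma ex_minP (P : nat -> Prop) : (exists n, P n) ->
  exists m, P m /\ forall n, P n -> (m <= n)%N.
Proof.
move=> [n0 Pn0]; apply: NNPP => no_min.
suff no_P : forall n, ~ P n by exact: no_P Pn0.
elim/ltn_ind => n IH Pn; apply: no_min; exists n; split=> // k Pk.
by rewrite leqNgt; apply/negP => /IH.
Qed.

Lemma ex_maxP (P : nat -> Prop) B : (exists n, P n) ->
  (forall n, P n -> (n <= B)%N) -> exists M, P M /\ forall n, P n -> (n <= M)%N.
Proof.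
move=> [n Pn] bounded.
have [m [Pm m_min]] : exists m, P (B - m)%N /\ forall k, P (B - k)%N -> (m <= k)%N.
  by apply: ex_minP; exists (B - n)%N; rewrite subKn ?bounded.
exists (B - m)%N; split=> // k Pk.
have := m_min (B - k)%N; rewrite subKn ?bounded // => /(_ Pk).
have := bounded k Pk; lia.
Qed.

Lemma sum_ge_size (s : seq rat) : (forall a, a \in s -> 1 <= a) ->
  (size s)%:R <= \sum_(a <- s) a.
Proof.
move=> s_ge1; have -> : (size s)%:R = \sum_(a <- s) (1 : rat).
  by rewrite big_const_seq count_predT iter_addr addr0.
by rewrite !big_seq; apply: ler_sum.
Qed.

(* For r >= 1 every atom is >= 1, so a factorization of x has at most x atoms:
   the set of lengths L(x) is bounded. *)
Lemma length_le r x n : 1 <= r -> in_L r x n -> n%:R <= x.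
Proof.
move=> r_ge1 [s [[s_atoms <-] <-]]; apply: sum_ge_size => a /s_atoms [a_in a_neq0 _].
exact: Sr_ge1 r_ge1 a_in a_neq0.
Qed.

Lemma length_lt_bound r x n : 1 <= r -> in_L r x n -> (n < Num.Def.archi_bound x)%N.
Proof.
move=> r_ge1 Ln; have n_le := length_le r_ge1 Ln.
have x_ge0 : 0 <= x := le_trans (ler0n _ n) n_le.
by rewrite -(ltr_nat rat) (le_lt_trans n_le) ?archi_boundP.
Qed.

Lemma length_gt0 r x n : x <> 0 -> in_L r x n -> (0 < n)%N.
Proof. by move=> x_neq0 [[|? ?] [[_ s_sum] <-]] //; rewrite -s_sum big_nil in x_neq0. Qed.

Lemma elasticity_ge r x m0 M0 : 1 <= r -> x <> 0 -> in_L r x m0 -> in_L r x M0 ->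
  exists q, rho_x r x (EFin q) /\ M0%:R / m0%:R <= q.
Proof.
move=> r_ge1 x_neq0 Lm0 LM0.
have [m [Lm m_min]] := ex_minP (ex_intro _ _ Lm0).
have [M [LM M_max]] := ex_maxP (ex_intro _ _ Lm0)
  (fun n Ln => ltnW (length_lt_bound r_ge1 Ln)).
exists (M%:R / m%:R); split.
  by right; split=> //; exists m; do !split=> //; left; exists M.
have m_gt0 := length_gt0 x_neq0 Lm; have m0_gt0 := length_gt0 x_neq0 Lm0.
rewrite ler_pdivrMr ?ltr0n // mulrAC ler_pdivlMr ?ltr0n // -!natrM ler_nat.
by rewrite leq_mul ?M_max ?m_min.
Qed.

Lemma no_infinite_elasticity r x : 1 <= r -> ~ rho_x r x EInf.
Proof.
move=> r_ge1 [[_ //]|[_ [m [_ [_ [[M [_ [_ //]]]|[unbounded _]]]]]]].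
have [n [Ln big_n]] := unbounded (Num.Def.archi_bound x).
by have := length_lt_bound r_ge1 Ln; rewrite ltnNge ltnW.
Qed.

Lemma in_L_nseq r a n : atom_Sr r a -> in_L r (n%:R * a) n.
Proof.
move=> a_atom; exists (nseq n a); split; last by rewrite size_nseq.
split; first by move=> z /nseqP [->].
by rewrite big_nseq iter_addr addr0 mulr_natl.
Qed.

Lemma rho_S_attained r x0 e : in_Sr r x0 -> x0 <> 0 -> rho_x r x0 e ->
  (forall x f, in_Sr r x -> x <> 0 -> rho_x r x f -> ele f e) -> rho_S r e.
Proof. by move=> x0_in x0_neq0 rho0 bound; split=> // e' /(_ _ _ x0_in x0_neq0 rho0). Qed.

Definition elasticity_accepted (r : rat) : Prop :=
  exists x e, [/\ in_Sr r x, rho_x r x e & rho_S r e].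

Lemma Sr_nat_elements (n : nat) x : in_Sr n%:R x -> exists k : nat, x = k%:R.
Proof.
move=> [c ->]; rewrite -/(sr_eval _ c).
elim: c => [|c0 c [k c_k]]; first by exists 0%N; rewrite sr_eval_nil.
by exists (c0 + n * k)%N; rewrite sr_eval_cons c_k natrD natrM.
Qed.

Lemma atom_nat (n : nat) a : atom_Sr n%:R a -> a = 1.
Proof.
move=> [a_in a_neq0 a_irr]; have [[|[|k]] a_k] := Sr_nat_elements a_in.
- by rewrite a_k in a_neq0.
- by [].
- have := a_irr 1 k.+1%:R (Sr_nat _ 1) (Sr_nat _ _).
  by rewrite a_k -natr1 addrC => /(_ erefl) [/eqP|/eqP]; rewrite ?oner_eq0 ?pnatr_eq0.
Qed.

Lemma length_nat (n : nat) x l : in_L n%:R x l -> x = l%:R.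
Proof.
move=> [s [[s_atoms <-] <-]]; rewrite big_seq (eq_bigr (fun=> 1)).
  by rewrite -big_seq big_const_seq count_predT iter_addr addr0.
by move=> a /s_atoms /atom_nat.
Qed.

Lemma elasticity_nat (n : nat) x f : x <> 0 -> rho_x n%:R x f -> f = EFin 1.
Proof.
move=> x_neq0 [[//]|[_ [m [Lm [_ [[M [LM [_ ->]]]|[unbounded _]]]]]]].
  have m_neq0 : m%:R != 0 :> rat by apply/eqP; rewrite -(length_nat Lm).
  by rewrite -(length_nat LM) (length_nat Lm) divff.
have [k [Lk /ltn_eqF]] := unbounded m.
by rewrite -(eqr_nat rat) -(length_nat Lm) -(length_nat Lk) eqxx.
Qed.

Lemma accepted_nat (n : nat) : (0 < n)%N -> elasticity_accepted n%:R.
Proof.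
move=> n_gt0; have n_ge1 : 1 <= n%:R :> rat by rewrite ler1n.
have L1 : in_L n%:R 1 1 by have := in_L_nseq 1 (atom_one n_ge1); rewrite mul1r.
have one_neq0 : 1 <> 0 :> rat by apply/eqP; rewrite oner_eq0.
have [q [rho1 _]] := elasticity_ge n_ge1 one_neq0 L1 L1.
have q1 := elasticity_nat one_neq0 rho1; rewrite q1 in rho1.
exists 1, (EFin 1); split; [exact: (Sr_nat _ 1) | exact: rho1 |].
apply: rho_S_attained (Sr_nat _ 1) one_neq0 rho1 _ => x f _ x_neq0 /(elasticity_nat x_neq0) ->.
exact: lexx.
Qed.

Lemma rat_lowest_terms (r : rat) : 0 < r ->
  exists a b : nat, [/\ r * b%:R = a%:R, coprime a b, (0 < a)%N & (0 < b)%N].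
Proof.
move=> r_gt0; pose a := `|numq r|%N; pose b := `|denq r|%N; exists a, b.
have r_ab : r * b%:R = a%:R.
  rewrite /a /b !natr_absz !ger0_norm ?numq_ge0 ?(ltW r_gt0) ?(ltW (denq_gt0 r)) //.
  by rewrite -{1}(divq_num_den r) divfK // intr_eq0 denq_neq0.
split=> //; first exact: coprime_num_den.
- by rewrite -(ltr_nat rat) -r_ab mulr_gt0 // ltr0n absz_gt0 denq_neq0.
- by rewrite absz_gt0 denq_neq0.
Qed.

(* Let r = a / b. Since a r^j = (b - a) r^(j+1) + a r^(j+1), iterating gives
   a = sum_(j < k) (b - a) r^(j+1) + a r^k. *)
Lemma geometric_split (r : rat) (a b : nat) k : r * b%:R = a%:R ->
  a%:R = \sum_(0 <= j < k) (b%:R - a%:R) * r ^+ j.+1 + a%:R * r ^+ k.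
Proof.
move=> r_ab; elim: k => [|k IH]; first by rewrite big_geq // add0r expr0 mulr1.
by rewrite {1}IH big_nat_recr //= exprS -r_ab; ring.
Qed.

Lemma sum_factorization r (L : seq rat) : atomic_Sr r ->
  (forall z, z \in L -> in_Sr r z /\ z <> 0) ->
  exists s, factorization r (\sum_(z <- L) z) s /\ (size L <= size s)%N.
Proof.
move=> r_atomic; elim: L => [|z L IH] L_nonzero.
  by exists [::]; rewrite big_nil; do !split; rewrite ?big_nil.
have [z_in z_neq0] := L_nonzero z (mem_head _ _).
have [s [[s_atoms s_sum] s_size]] := IH (fun w w_in => L_nonzero w (mem_behead (s := z :: L) w_in)).
have [sz [sz_atoms sz_sum]] := r_atomic z z_in z_neq0.
have sz_gt0 : (0 < size sz)%N by apply: (length_gt0 (r := r) z_neq0); exists sz.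
exists (sz ++ s); split; last by rewrite size_cat /=; lia.
split; last by rewrite big_cat big_cons sz_sum s_sum.
by move=> w; rewrite mem_cat => /orP [/sz_atoms|/s_atoms].
Qed.

Lemma long_factorizations r (a b : nat) N : atomic_Sr r -> 0 < r ->
  r * b%:R = a%:R -> (0 < a < b)%N -> exists n, in_L r a%:R n /\ (N < n)%N.
Proof.
move=> r_atomic r_gt0 r_ab /andP [a_gt0 a_lt_b].
pose L := a%:R * r ^+ N :: [seq (b%:R - a%:R) * r ^+ j.+1 | j <- index_iota 0 N].
have L_nonzero : forall z, z \in L -> in_Sr r z /\ z <> 0.
  have ba_gt0 : 0 < b%:R - a%:R :> rat by rewrite subr_gt0 ltr_nat.
  move=> z; rewrite inE => /orP [/eqP ->|/mapP [j _ ->]].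
    by split; [apply/SrMn/SrX | apply/eqP; rewrite gt_eqF // mulr_gt0 ?exprn_gt0 ?ltr0n].
  split; last by apply/eqP; rewrite gt_eqF // mulr_gt0 ?exprn_gt0.
  by rewrite -natrB ?(ltnW a_lt_b) //; apply/SrMn/SrX.
have [s [s_fact s_size]] := sum_factorization r_atomic L_nonzero.
exists (size s); split.
  exists s; split=> //; move: s_fact.
  by rewrite big_cons big_map addrC -(geometric_split N r_ab).
by move: s_size; rewrite /= size_map size_iota subn0.
Qed.

Lemma infinite_elasticity r x : atomic_Sr r -> in_Sr r x -> x <> 0 ->
  (forall N : nat, exists n, in_L r x n /\ (N < n)%N) -> rho_x r x EInf.
Proof.
move=> r_atomic x_in x_neq0 unbounded; right; split=> //.
have [s s_fact] := r_atomic x x_in x_neq0.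
have Ls : in_L r x (size s) by exists s.
have [m [Lm m_min]] := ex_minP (ex_intro _ _ Ls).
by exists m; do !split=> //; right.
Qed.

Lemma accepted_lt1 r : 0 < r < 1 -> atomic_Sr r -> elasticity_accepted r.
Proof.
move=> /andP [r_gt0 r_lt1] r_atomic.
have [a [b [r_ab _ a_gt0 b_gt0]]] := rat_lowest_terms r_gt0.
have a_lt_b : (a < b)%N.
  by rewrite -(ltr_nat rat) -r_ab gtr_pMl // ltr0n.
have a_neq0 : a%:R <> 0 :> rat by apply/eqP; rewrite pnatr_eq0 -lt0n.
have rho_a : rho_x r a%:R EInf.
  apply: (infinite_elasticity r_atomic (Sr_nat r a) a_neq0) => N.
  by apply: (long_factorizations _ r_atomic r_gt0 r_ab); rewrite a_gt0.
exists a%:R, EInf; split; [exact: Sr_nat | exact: rho_a |].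
by apply: rho_S_attained (Sr_nat r a) a_neq0 rho_a _ => x [].
Qed.

(* Bernoulli's inequality; it makes the powers of r > 1 unbounded. *)
Lemma bernoulli (r : rat) k : 1 <= r -> 1 + k%:R * (r - 1) <= r ^+ k.
Proof.
move=> r_ge1; elim: k => [|k IH]; first by rewrite expr0 mul0r addr0.
have step : r * (1 + k%:R * (r - 1)) <= r * r ^+ k by rewrite ler_wpM2l //; lra.
have : 0 <= k%:R * (r - 1) * (r - 1) by rewrite !mulr_ge0 //; lra.
by rewrite exprS -natr1; nra.
Qed.

(* For r = a / b > 1 in lowest terms with b > 1, the element a^k = a^k * 1
   = b^k * r^k has factorizations of lengths a^k and b^k (all r^j are atoms),
   so its elasticity is at least (a / b)^k = r^k. *)
Lemma elasticity_power_ge r (a b : nat) k : 1 <= r -> r * b%:R = a%:R ->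
  coprime a b -> (0 < a)%N -> (1 < b)%N ->
  exists q, rho_x r (a ^ k)%:R (EFin q) /\ r ^+ k <= q.
Proof.
move=> r_ge1 r_ab cop_ab a_gt0 b_gt1.
have atom k' := power_atom k' r_ge1 r_ab cop_ab b_gt1.
have L_ones : in_L r (a ^ k)%:R (a ^ k) by have := in_L_nseq (a ^ k) (atom 0%N); rewrite mulr1.
have L_pows : in_L r (a ^ k)%:R (b ^ k).
  by have := in_L_nseq (b ^ k) (atom k); rewrite !natrX mulrC -exprMn r_ab.
have ak_neq0 : (a ^ k)%:R <> 0 :> rat by apply/eqP; rewrite pnatr_eq0 -lt0n expn_gt0 a_gt0.
have [q [rho_q q_ge]] := elasticity_ge r_ge1 ak_neq0 L_pows L_ones.
exists q; split=> //; apply: le_trans q_ge.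
have b_neq0 : b%:R != 0 :> rat by rewrite pnatr_eq0 -lt0n ltnW.
by rewrite !natrX -expr_div_n -r_ab mulfK.
Qed.

(* For r >= 1 not an integer, rho(S_r) = oo is not accepted: it cannot be a
   finite q, since rho(a^k) >= r^k grows beyond q, and no rho(x) is infinite. *)
Lemma not_accepted r : 1 <= r -> ~ (exists n : nat, r = n%:R) ->
  ~ elasticity_accepted r.
Proof.
move=> r_ge1 r_notnat [x [e [_ rho_xe [bound _]]]].
have [a [b [r_ab cop_ab a_gt0 b_gt0]]] := rat_lowest_terms (lt_le_trans ltr01 r_ge1).
have b_gt1 : (1 < b)%N.
  rewrite ltn_neqAle b_gt0 andbT; apply/eqP => b1; apply: r_notnat.
  by exists a; rewrite -r_ab -b1 mulr1.
have r_gt1 : 1 < r.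
  rewrite lt_neqAle r_ge1 andbT; apply/eqP => r1; apply: r_notnat.
  by exists 1%N; rewrite -r1.
case: e rho_xe bound => [q|] rho_xe bound; last exact: no_infinite_elasticity r_ge1 rho_xe.
pose k := Num.Def.archi_bound (`|q| / (r - 1)).
have k_big : `|q| < k%:R * (r - 1).
  by rewrite -ltr_pdivrMr ?subr_gt0 // archi_boundP // divr_ge0 ?subr_ge0.
have [q' [rho_q' q'_ge]] := elasticity_power_ge k r_ge1 r_ab cop_ab a_gt0 b_gt1.
have q'_le : q' <= q.
  apply: (bound _ _ (Sr_nat r _) _ rho_q').
  by apply/eqP; rewrite pnatr_eq0 -lt0n expn_gt0 a_gt0.
have : `|q| < q.
  apply: (lt_le_trans k_big); apply: le_trans (le_trans q'_ge q'_le).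
  by apply: le_trans (bernoulli k r_ge1); rewrite lerDr.
by rewrite ltNge ler_norm.
Qed.

Theorem proposition4p3 (r : rat) (hr : 0 < r) (hat : atomic_Sr r) :
  (exists x e, [/\ in_Sr r x, rho_x r x e & rho_S r e]) <->
  ((exists n : nat, r = n%:R) \/ r < 1).
Proof.
split.
- move=> accepted; case: (ltrP r 1) => [r_lt1|r_ge1]; first by right.
  by left; apply: NNPP => r_notnat; exact: not_accepted r_ge1 r_notnat accepted.
- case=> [[n r_n]|r_lt1].
  + by rewrite r_n; apply: accepted_nat; rewrite -(ltr_nat rat) -r_n.
  + by apply: accepted_lt1; rewrite ?hr.
Qed.
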